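(* Let $d\ge 1$, $T\ge 1$, let $\mathcal{X}\subseteq\mathbb{R}^d$ be a non-empty closed convex set, and let $0<\mu\le L$. Let $f_1,\dots,f_T:\mathcal{X}\to[0,\infty)$ be differentiable with $\frac{\mu}{2}\|y-x\|^2\le f_t(y)-f_t(x)-\langle\nabla f_t(x),y-x\rangle\le\frac{L}{2}\|y-x\|^2$ for all $t$ and $x,y\in\mathcal{X}$. Let $C_{\mathcal{A}_o}$ be the quadratic-switching cost of the OMGD algorithm with $K=\lceil\frac{L+\mu}{2\mu}\ln4\rceil$ from a starting point $x_0\in\mathcal{X}$. Then for any $\alpha>0$, $$C_{\mathcal{A}_o}\le\sum_{t=1}^T f_t(x_t^\star)+\frac{1}{2\alpha}\sum_{t=1}^T\|\nabla f_t(x_t^\star)\|^2+(L+\alpha+5)\big(\|x_1-x_1^\star\|^2+2\mathcal{P}_{2,T}^\star\big),$$ where $x_1$ is the first OMGD iterate.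
   Context: $x_t^\star=\arg\min_{x\in\mathcal{X}}f_t(x)$ and $\mathcal{P}_{2,T}^\star=\sum_{t=2}^T\|x_t^\star-x_{t-1}^\star\|^2$. OMGD with parameter $K$: $x_1=x_0$; for $t=2,\dots,T$, $z_t^{(0)}=x_{t-1}$, $z_t^{(k)}=\Pi_{\mathcal{X}}\big(z_t^{(k-1)}-\frac1L\nabla f_{t-1}(z_t^{(k-1)})\big)$ ($k=1,\dots,K$), $x_t=z_t^{(K)}$, where $\Pi_{\mathcal{X}}$ is Euclidean projection onto $\mathcal{X}$. $C_{\mathcal{A}_o}=\sum_{t=1}^T\big(f_t(x_t)+\frac12\|x_t-x_{t-1}\|^2\big)$. *)

From HB Require Import structures.
From mathcomp Require Import all_boot all_order all_algebra.
From mathcomp Require Import all_classical all_reals all_analysis.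
Set Implicit Arguments. Unset Strict Implicit. Unset Printing Implicit Defensive.
Import Order.TTheory GRing.Theory Num.Theory numFieldNormedType.Exports.
Local Open Scope classical_set_scope.
Local Open Scope ring_scope.

Section Defs.
Variables (R : realType) (d : nat).
Notation V := 'rV[R]_d.

Definition dotp (u v : V) : R := \sum_(i < d) u 0 i * v 0 i.
Definition sqnorm (u : V) : R := dotp u u.

Definition is_convex_set (X : set V) : Prop :=
  forall x y, X x -> X y -> forall l : R, 0 <= l <= 1 ->
    X (l *: x + (1 - l) *: y).

Definition grad (f : V -> R) (x : V) : V :=
  \row_(i < d) ('d f x (delta_mx 0 i : V)).

Definition is_proj (X : set V) (y p : V) : Prop :=
  X p /\ forall z, X z -> sqnorm (y - p) <= sqnorm (y - z).
Definition proj (X : set V) (y : V) : V := xget 0 [set p | is_proj X y p].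

Definition is_argmin (X : set V) (f : V -> R) (x : V) : Prop :=
  X x /\ forall y, X y -> f x <= f y.
Definition argmin (X : set V) (f : V -> R) : V := xget 0 [set x | is_argmin X f x].

(* OMGD with K inner steps: x_0 = x_1 = x0, x_t = K projected gradient steps
   on f_{t-1} with step 1/L started from x_{t-1} (t >= 2). *)
Fixpoint omgd (X : set V) (f : nat -> V -> R) (L : R) (K : nat) (x0 : V)
  (t : nat) : V :=
  match t with
  | 0 => x0
  | 1 => x0
  | (s.+1 as t').+1 =>
      iter K (fun z => proj X (z - L^-1 *: grad (f t') z))
        (omgd X f L K x0 t')
  end.

Definition omgd_cost (X : set V) (f : nat -> V -> R) (L : R) (K : nat) (x0 : V)
  (T : nat) : R :=
  \sum_(1 <= t < T.+1)
     (f t (omgd X f L K x0 t)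
      + 2^-1 * sqnorm (omgd X f L K x0 t - omgd X f L K x0 t.-1)).

Definition path_len (X : set V) (f : nat -> V -> R) (T : nat) : R :=
  \sum_(2 <= t < T.+1) sqnorm (argmin X (f t) - argmin X (f t.-1)).

End Defs.

From Pilot Require Import Defs.
From HB Require Import structures.
From mathcomp Require Import all_boot all_order all_algebra.
From mathcomp Require Import all_classical all_reals all_analysis.
From mathcomp Require Import ring lra zify.
Set Implicit Arguments. Unset Strict Implicit. Unset Printing Implicit Defensive.
Import Order.TTheory GRing.Theory Num.Theory numFieldNormedType.Exports.
Local Open Scope classical_set_scope.
Local Open Scope ring_scope.

(* A projected gradient step of size 1/L on a mu-strongly convex, L-smooth
   function contracts the squared distance to the constrained minimizer by
   (L - mu) / (L + mu); with K inner steps OMGD contracts it by 1/4.  Hence the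
   tracking error a_t = |x_t - x*_t|^2 satisfies
   a_(t+1) <= a_t / 2 + 2 |x*_(t+1) - x*_t|^2, which sums to
   sum_t a_t <= 2 a_1 + 4 P*_(2,T).  Smoothness and Young's inequality bound
   the hitting cost f_t(x_t) by f_t(x*_t) + |grad f_t(x*_t)|^2 / (2 alpha)
   + (L + alpha) / 2 a_t, and the switching cost |x_(t+1) - x_t|^2 is at most
   5/2 a_t. *)

Section Euclidean.
Variables (R : realType) (d : nat).
Implicit Types (u v w : 'rV[R]_d) (a : R).

Lemma dotpC u v : dotp u v = dotp v u.
Proof. by apply: eq_bigr => i _; rewrite mulrC. Qed.

Lemma dotpDl u v w : dotp (u + v) w = dotp u w + dotp v w.
Proof. by rewrite /dotp -big_split; apply: eq_bigr => i _; rewrite mxE mulrDl. Qed.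

Lemma dotpZl a u v : dotp (a *: u) v = a * dotp u v.
Proof. by rewrite /dotp mulr_sumr; apply: eq_bigr => i _; rewrite mxE mulrA. Qed.

Lemma dotpNl u v : dotp (- u) v = - dotp u v.
Proof. by rewrite -scaleN1r dotpZl mulN1r. Qed.

Lemma dotpBl u v w : dotp (u - v) w = dotp u w - dotp v w.
Proof. by rewrite dotpDl dotpNl. Qed.

Lemma dotpDr u v w : dotp w (u + v) = dotp w u + dotp w v.
Proof. by rewrite dotpC dotpDl !(dotpC w). Qed.

Lemma dotpZr a u v : dotp v (a *: u) = a * dotp v u.
Proof. by rewrite dotpC dotpZl dotpC. Qed.

Lemma dotpNr u v : dotp v (- u) = - dotp v u.
Proof. by rewrite dotpC dotpNl dotpC. Qed.

Lemma dotpBr u v w : dotp w (u - v) = dotp w u - dotp w v.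
Proof. by rewrite dotpDr dotpNr. Qed.

Lemma sqnorm_ge0 u : 0 <= sqnorm u.
Proof. by apply: sumr_ge0 => i _; rewrite -expr2 sqr_ge0. Qed.

Lemma sqnorm0 : sqnorm (0 : 'rV[R]_d) = 0.
Proof. by rewrite /sqnorm /dotp big1 // => i _; rewrite mxE mul0r. Qed.

Lemma sqnormN u : sqnorm (- u) = sqnorm u.
Proof. by rewrite /sqnorm dotpNl dotpNr opprK. Qed.

Lemma sqnormBZ u v a :
  sqnorm (u - a *: v) = sqnorm u - 2 * a * dotp u v + a ^+ 2 * sqnorm v.
Proof. by rewrite /sqnorm dotpBl !dotpBr !dotpZl !dotpZr (dotpC v u); ring. Qed.

Lemma sqnormB u v : sqnorm (u - v) = sqnorm u - 2 * dotp u v + sqnorm v.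
Proof. by rewrite -[v in LHS]scale1r sqnormBZ expr1n mul1r mulr1. Qed.

Lemma sqnormB_le u v : sqnorm (u - v) <= 2 * sqnorm u + 2 * sqnorm v.
Proof.
by have := sqnorm_ge0 (u - - v); rewrite !sqnormB sqnormN dotpNr; lra.
Qed.

Lemma dotp_le_young u v a : 0 < a ->
  dotp u v <= (2 * a)^-1 * sqnorm u + a / 2 * sqnorm v.
Proof.
move=> a_gt0; have := sqnorm_ge0 (u - a *: v); rewrite sqnormBZ => uv_ge0.
have -> : (2 * a)^-1 * sqnorm u + a / 2 * sqnorm v =
          (2 * a)^-1 * (sqnorm u + a ^+ 2 * sqnorm v) by field; lra.
rewrite ler_pdivlMl ?mulr_gt0 //; lra.
Qed.

Lemma sqr_coord_le_sqnorm u i : u 0 i ^+ 2 <= sqnorm u.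
Proof.
rewrite /sqnorm /dotp (bigD1 i) //= expr2 lerDl.
by apply: sumr_ge0 => j _; rewrite -expr2 sqr_ge0.
Qed.

Lemma continuous_sqnorm : continuous (@sqnorm R d).
Proof.
apply: continuous_big => [|i _ u]; first exact: add_continuous.
by apply: continuousM; exact: coord_continuous.
Qed.

End Euclidean.

Lemma le0_of_le_scale (R : realFieldType) (a b : R) :
  0 <= b -> (forall l, 0 < l <= 1 -> a <= l * b) -> a <= 0.
Proof.
move=> b_ge0 small; rewrite leNgt; apply/negP => a_gt0.
have ab_gt0 : 0 < a + b by rewrite ltr_wpDr.
have l_gt0 : 0 < a / (a + b) by rewrite divr_gt0.
have l_le1 : a / (a + b) <= 1 by rewrite ler_pdivrMr ?mul1r ?lerDl.
have := small (a / (a + b)); rewrite l_gt0 l_le1 => /(_ isT).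
by rewrite mulrAC ler_pdivlMr //; nra.
Qed.

Lemma sum_nat_succ_le (R : numDomainType) (s b : nat -> R) n :
  (forall t, (1 <= t <= n)%N -> s t.+1 <= b t) ->
  \sum_(1 <= t < n.+2) s t <= s 1%N + \sum_(1 <= t < n.+1) b t.
Proof.
move=> sb; rewrite big_nat_recl // lerD2l.
by apply: ler_sum_nat => t /andP[t1 tn]; apply: sb; rewrite t1 -ltnS.
Qed.

Lemma sum_le_of_halving (R : realFieldType) (a p : nat -> R) n :
  (forall t, (1 <= t <= n)%N -> a t.+1 <= a t / 2 + 2 * p t.+1) -> 0 <= a n.+1 ->
  \sum_(1 <= t < n.+2) a t <= 2 * a 1%N + 4 * \sum_(2 <= t < n.+2) p t.
Proof.
move=> halving a_ge0; have := sum_nat_succ_le halving.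
rewrite big_split /= -mulr_suml -mulr_sumr.
rewrite [in X in _ <= _ + 4 * X]big_add1 /=.
rewrite (big_nat_recr n.+1) //=.
lra.
Qed.

Section FirstOrder.
Variables (R : realType) (d : nat) (X : set 'rV[R]_d).
Implicit Types (f : 'rV[R]_d -> R) (g : 'rV[R]_d -> 'rV[R]_d) (x y z : 'rV[R]_d).

Definition strongly_convex_on f g mu := forall x y, X x -> X y ->
  mu / 2 * sqnorm (y - x) <= f y - f x - dotp (g x) (y - x).

Definition smooth_on f g L := forall x y, X x -> X y ->
  f y - f x - dotp (g x) (y - x) <= L / 2 * sqnorm (y - x).

Lemma smooth_on_le_young f g L alpha x y : smooth_on f g L -> X x -> X y ->
  0 < alpha ->
  f y <= f x + (2 * alpha)^-1 * sqnorm (g x) + (L + alpha) / 2 * sqnorm (y - x).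
Proof.
move=> smooth Xx Xy alpha_gt0.
by have := smooth _ _ Xx Xy; have := dotp_le_young (g x) (y - x) alpha_gt0; lra.
Qed.

Lemma exists_argmin (h : 'rV[R]_d -> R) c D : closed X -> X c ->
  (forall x, X x -> {for x, continuous h}) ->
  (forall z, X z -> h z <= h c -> sqnorm (z - c) <= D) ->
  exists x, is_argmin X h x.
Proof.
move=> X_closed Xc h_cont sublevel.
have D_ge0 : 0 <= D by apply: le_trans (sublevel c Xc (lexx _)); exact: sqnorm_ge0.
pose box := [set v : 'rV[R]_d | forall i,
  `[c 0 i - (1 + D), c 0 i + (1 + D)]%classic (v 0 i)].
have in_box z : X z -> h z <= h c -> box z.
  move=> Xz hz i /=; have := sqr_coord_le_sqnorm (z - c) i.
  have := sublevel _ Xz hz; rewrite !mxE in_itv /= => dist_le coord_le.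
  by apply/andP; split; nra.
have box_compact : compact (box `&` X).
  apply: compact_closedI => //.
  apply: (@rV_compact _ _ (fun i => `[c 0 i - (1 + D), c 0 i + (1 + D)]%classic)).
  by move=> i; exact: segment_compact.
have [x /set_mem [_ Xx] x_min] : exists2 x, x \in box `&` X &
    forall t, t \in box `&` X -> h x <= h t.
  apply: EVT_min_rV => //; first by exists c; split => //; exact: in_box.
  by apply: continuous_in_subspaceT => x /set_mem [_ Xx]; exact: h_cont.
have hx_le : h x <= h c by apply: x_min; apply/mem_set; split => //; exact: in_box.
exists x; split => // y Xy; have [hy_le|/ltW hc_le] := leP (h y) (h c).
  by apply: x_min; apply/mem_set; split => //; exact: in_box.
exact: le_trans hx_le hc_le.
Qed.

Lemma is_proj_proj y : closed X -> X !=set0 -> is_proj X y (Defs.proj X y).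
Proof.
move=> X_closed [c Xc]; apply: xgetPex.
have [p [Xp p_min]] : exists p, is_argmin X (fun z => sqnorm (y - z)) p.
  apply: (@exists_argmin _ c (4 * sqnorm (y - c))) => // [x _ | z Xz yz_le].
    apply: continuous_comp; last exact: continuous_sqnorm.
    by apply: continuousB; [exact: cst_continuous | exact: cvg_id].
  have -> : z - c = (y - c) - (y - z) by rewrite opprB [RHS]addrC addrA subrK.
  apply: le_trans (sqnormB_le _ _) _; lra.
by exists p.
Qed.

(* Strong convexity confines the sublevel set {f <= f c} to a ball around c. *)
Lemma is_argmin_argmin f g mu : closed X -> X !=set0 -> 0 < mu ->
  strongly_convex_on f g mu -> (forall x, X x -> {for x, continuous f}) ->
  is_argmin X f (argmin X f).
Proof.
move=> X_closed [c Xc] mu_gt0 sc f_cont; apply: xgetPex.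
apply: (@exists_argmin f c (4 * sqnorm (g c) / mu ^+ 2)) => // z Xz fz_le.
have descent : dotp (g c) (z - c) <= - (mu / 2) * sqnorm (z - c).
  by have := sc _ _ Xc Xz; lra.
have := sqnorm_ge0 (mu *: (z - c) - (- 2) *: g c).
rewrite sqnormBZ /sqnorm dotpZl dotpZr dotpZl -!/(sqnorm _) (dotpC (z - c)).
rewrite ler_pdivlMr ?exprn_gt0 //; nra.
Qed.

Lemma is_proj_dotp_le0 y p z : is_convex_set X -> is_proj X y p -> X z ->
  dotp (y - p) (z - p) <= 0.
Proof.
move=> X_convex [Xp p_min] Xz.
apply: (@le0_of_le_scale _ _ (sqnorm (z - p) / 2)).
  by rewrite divr_ge0 ?sqnorm_ge0.
move=> l /andP[l_gt0 l_le1].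
have := p_min _ (X_convex _ _ Xz Xp l _); rewrite (ltW l_gt0) l_le1 => /(_ isT).
have -> : y - (l *: z + (1 - l) *: p) = (y - p) - l *: (z - p).
  by apply/rowP => i; rewrite !mxE; ring.
rewrite sqnormBZ; have := sqnorm_ge0 (z - p); nra.
Qed.

Lemma is_argmin_dotp_ge0 f g L xs y : is_convex_set X -> 0 <= L ->
  smooth_on f g L -> is_argmin X f xs -> X y -> 0 <= dotp (g xs) (y - xs).
Proof.
move=> X_convex L_ge0 smooth [Xxs xs_min] Xy; rewrite -oppr_le0.
apply: (@le0_of_le_scale _ _ (L / 2 * sqnorm (y - xs))).
  by rewrite mulr_ge0 ?divr_ge0 ?sqnorm_ge0.
move=> l /andP[l_gt0 l_le1].
have := X_convex _ _ Xy Xxs l; rewrite (ltW l_gt0) l_le1 => /(_ isT) Xw.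
have := smooth _ _ Xxs Xw; have := xs_min _ Xw.
have -> : l *: y + (1 - l) *: xs - xs = l *: (y - xs).
  by apply/rowP => i; rewrite !mxE; ring.
rewrite dotpZr /sqnorm dotpZl dotpZr -/(sqnorm _).
have := sqnorm_ge0 (y - xs); nra.
Qed.

End FirstOrder.

Section ProjectedGradient.
Variables (R : realType) (d : nat) (X : set 'rV[R]_d).
Hypotheses (X_closed : closed X) (X_nonempty : X !=set0).
Hypothesis X_convex : is_convex_set X.
Variables (f : 'rV[R]_d -> R) (g : 'rV[R]_d -> 'rV[R]_d) (mu L : R).
Hypotheses (mu_gt0 : 0 < mu) (mu_le_L : mu <= L).
Hypotheses (f_sc : strongly_convex_on X f g mu) (f_smooth : smooth_on X f g L).

Definition proj_grad_step (z : 'rV[R]_d) := Defs.proj X (z - L^-1 *: g z).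

Lemma proj_grad_step_in z : X (proj_grad_step z).
Proof. exact: (is_proj_proj _ X_closed X_nonempty).1. Qed.

Lemma proj_grad_step_contract xs z : is_argmin X f xs -> X z ->
  (L + mu) * sqnorm (proj_grad_step z - xs) <= (L - mu) * sqnorm (z - xs).
Proof.
(* Add smoothness from z to p, strong convexity from z to xs and from xs to p,
   first-order optimality of xs and the obtuse angle at the projection p. *)
move=> xs_argmin Xz; have Xxs := xs_argmin.1.
have L_gt0 : 0 < L by apply: lt_le_trans mu_le_L.
have p_proj := is_proj_proj (z - L^-1 *: g z) X_closed X_nonempty.
rewrite -/(proj_grad_step z) in p_proj *; set p := proj_grad_step z in p_proj *.
have Xp := p_proj.1.
have := is_argmin_dotp_ge0 X_convex (ltW L_gt0) f_smooth xs_argmin Xp.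
have := is_proj_dotp_le0 X_convex p_proj Xxs.
have := f_sc Xxs Xp; have := f_sc Xz Xxs; have := f_smooth Xz Xp.
have -> : p - z = (p - xs) - (z - xs) by rewrite opprB addrA subrK.
have -> : xs - z = - (z - xs) by rewrite opprB.
have -> : z - L^-1 *: g z - p = (z - xs) - (p - xs) - L^-1 *: g z.
  by apply/rowP => i; rewrite !mxE; ring.
have -> : xs - p = - (p - xs) by rewrite opprB.
move: (z - xs) (p - xs) => u w.
rewrite !sqnormB sqnormN !dotpNr !dotpBr !dotpBl !dotpZl (dotpC w u).
move=> up low_z low_xs vi opt.
have step : dotp (g z) w <= L * (dotp u w - sqnorm w).
  rewrite -[dotp (g z) w](mulVKf (lt0r_neq0 L_gt0)) ler_pM2l //.
  by rewrite /sqnorm; lra.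
lra.
Qed.

Lemma iter_proj_grad_step_in k z : X z -> X (iter k proj_grad_step z).
Proof. by case: k => [|k] //= _; exact: proj_grad_step_in. Qed.

Lemma iter_proj_grad_step_contract xs k z : is_argmin X f xs -> X z ->
  sqnorm (iter k proj_grad_step z - xs)
    <= ((L - mu) / (L + mu)) ^+ k * sqnorm (z - xs).
Proof.
move=> xs_argmin Xz; have L_gt0 : 0 < L by apply: lt_le_trans mu_le_L.
have rate_ge0 : 0 <= (L - mu) / (L + mu).
  by rewrite divr_ge0 ?subr_ge0 // ltW // addr_gt0.
elim: k => [|k IHk]; first by rewrite expr0 mul1r.
rewrite iterS exprS -mulrA; apply: le_trans (ler_wpM2l rate_ge0 IHk).
rewrite mulrAC ler_pdivlMr ?addr_gt0 // mulrC.
by apply: proj_grad_step_contract xs_argmin _; exact: iter_proj_grad_step_in.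
Qed.

End ProjectedGradient.

(* The rate is [1 - 2 mu / (L + mu) <= expR (- 2 mu / (L + mu))], and K is
   chosen so that [K * 2 mu / (L + mu) >= ln 4]. *)
Lemma contraction_pow_ceil_le_quarter (R : realType) (mu L : R) :
  0 < mu -> mu <= L ->
  ((L - mu) / (L + mu)) ^+ `|Num.ceil ((L + mu) / (2 * mu) * ln 4)|%N <= 4^-1.
Proof.
move=> mu_gt0 mu_le_L; have Lmu_gt0 : 0 < L + mu by apply: addr_gt0; lra.
set c := (L + mu) / (2 * mu) * ln 4.
have c_ge0 : 0 <= c.
  by rewrite mulr_ge0 ?ln_ge0 ?divr_ge0 ?mulr_ge0 ?ltW //; lra.
have c_le_K : c <= (`|Num.ceil c|%N)%:R.
  by rewrite natr_absz ger0_norm ?ceil_ge // ceil_ge0; lra.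
set K := `|Num.ceil c|%N in c_le_K *.
have rate_ge0 : 0 <= (L - mu) / (L + mu) by rewrite divr_ge0 ?subr_ge0 // ltW.
have rate_le : (L - mu) / (L + mu) <= expR (- (2 * mu / (L + mu))).
  have -> : (L - mu) / (L + mu) = 1 - 2 * mu / (L + mu) by field; lra.
  exact: expR_ge1Dx.
apply: le_trans (lerXn2r _ _ _ rate_le) _; rewrite ?nnegrE ?expR_ge0 //.
rewrite -expRM_natl -[4^-1]lnK ?posrE // lnV ?posrE // ler_expR.
have : ln 4 <= 2 * mu / (L + mu) * K%:R.
  have -> : ln 4 = 2 * mu / (L + mu) * c :> R by rewrite /c; field; lra.
  by rewrite ler_wpM2l // divr_ge0 ?ltW //; lra.
lra.
Qed.

Section OMGD.
Variables (R : realType) (d : nat) (X : set 'rV[R]_d).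
Hypotheses (X_closed : closed X) (X_nonempty : X !=set0).
Hypothesis X_convex : is_convex_set X.
Variables (f : nat -> 'rV[R]_d -> R) (mu L : R) (K T : nat) (x0 : 'rV[R]_d).
Hypotheses (mu_gt0 : 0 < mu) (mu_le_L : mu <= L) (X_x0 : X x0).
Hypothesis f_cont :
  forall t, (1 <= t <= T)%N -> forall x, X x -> {for x, continuous (f t)}.
Hypothesis f_sc :
  forall t, (1 <= t <= T)%N -> strongly_convex_on X (f t) (grad (f t)) mu.
Hypothesis f_smooth :
  forall t, (1 <= t <= T)%N -> smooth_on X (f t) (grad (f t)) L.
Hypothesis K_rate : ((L - mu) / (L + mu)) ^+ K <= 4^-1.

Local Notation x := (omgd X f L K x0).
Local Notation xs t := (argmin X (f t)).

Lemma omgdSS t : x t.+2 = iter K (proj_grad_step X (grad (f t.+1)) L) (x t.+1).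
Proof. by []. Qed.

Lemma omgd_in t : X (x t).
Proof. by elim: t => [|[|t] IHt] //; rewrite omgdSS; exact: iter_proj_grad_step_in. Qed.

Lemma is_argmin_xs t : (1 <= t <= T)%N -> is_argmin X (f t) (xs t).
Proof. by move=> tT; apply: is_argmin_argmin (f_sc tT) (f_cont tT). Qed.

Lemma omgd_succ_dist t : (1 <= t <= T)%N ->
  sqnorm (x t.+1 - xs t) <= 4^-1 * sqnorm (x t - xs t).
Proof.
case: t => [|t] // tT; rewrite omgdSS.
apply: le_trans (iter_proj_grad_step_contract X_closed X_nonempty X_convex
  mu_gt0 mu_le_L (f_sc tT) (f_smooth tT) K (is_argmin_xs tT) (omgd_in _)) _.
by rewrite ler_wpM2r ?sqnorm_ge0.
Qed.

Lemma omgd_tracking_succ t : (1 <= t < T)%N ->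
  sqnorm (x t.+1 - xs t.+1)
    <= sqnorm (x t - xs t) / 2 + 2 * sqnorm (xs t.+1 - xs t).
Proof.
move=> tT; have tT' : (1 <= t <= T)%N by lia.
have := omgd_succ_dist tT'.
have -> : x t.+1 - xs t.+1 = (x t.+1 - xs t) - (xs t.+1 - xs t).
  by rewrite opprB addrA subrK.
have := sqnormB_le (x t.+1 - xs t) (xs t.+1 - xs t); lra.
Qed.

Lemma omgd_switch_le t : (1 <= t <= T)%N ->
  sqnorm (x t.+1 - x t) <= 5 / 2 * sqnorm (x t - xs t).
Proof.
move=> tT; have := omgd_succ_dist tT.
have -> : x t.+1 - x t = (x t.+1 - xs t) - (x t - xs t).
  by rewrite opprB addrA subrK.
have := sqnormB_le (x t.+1 - xs t) (x t - xs t); have := sqnorm_ge0 (x t - xs t).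
lra.
Qed.

Lemma omgd_sum_tracking_le : (1 <= T)%N ->
  \sum_(1 <= t < T.+1) sqnorm (x t - xs t)
    <= 2 * sqnorm (x 1%N - xs 1%N) + 4 * path_len X f T.
Proof.
move=> T_gt0; rewrite /path_len -(prednK T_gt0).
apply: sum_le_of_halving => [t tT|]; last exact: sqnorm_ge0.
by apply: omgd_tracking_succ; lia.
Qed.

Lemma omgd_sum_switch_le : (1 <= T)%N ->
  \sum_(1 <= t < T.+1) sqnorm (x t - x t.-1)
    <= 5 / 2 * \sum_(1 <= t < T.+1) sqnorm (x t - xs t).
Proof.
move=> T_gt0; rewrite -(prednK T_gt0) mulr_sumr.
apply: le_trans (sum_nat_succ_le
  (b := fun t => 5 / 2 * sqnorm (x t - xs t)) _) _.
  by move=> t tT; apply: omgd_switch_le; lia.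
rewrite /= subrr sqnorm0 add0r [X in _ <= X]big_nat_recr //= lerDl.
by rewrite mulr_ge0 ?sqnorm_ge0.
Qed.

End OMGD.

Theorem lemma4 (R : realType) (d T : nat) (X : set 'rV[R]_d) (mu L : R)
  (f : nat -> 'rV[R]_d -> R) (x0 : 'rV[R]_d) (alpha : R) :
  (1 <= d)%N -> (1 <= T)%N ->
  X !=set0 -> closed X -> Defs.is_convex_set X ->
  0 < mu -> mu <= L ->
  (forall t, (1 <= t <= T)%N -> forall x, X x -> differentiable (f t) x) ->
  (forall t, (1 <= t <= T)%N -> forall x, X x -> 0 <= f t x) ->
  (forall t, (1 <= t <= T)%N -> forall x y, X x -> X y ->
     mu / 2 * sqnorm (y - x) <= f t y - f t x - dotp (grad (f t) x) (y - x)
     /\ f t y - f t x - dotp (grad (f t) x) (y - x) <= L / 2 * sqnorm (y - x)) ->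
  X x0 -> 0 < alpha ->
  let K := `|Num.ceil ((L + mu) / (2 * mu) * ln 4)|%N in
  let xs := fun t => argmin X (f t) in
  omgd_cost X f L K x0 T
  <= \sum_(1 <= t < T.+1) f t (xs t)
     + (2 * alpha)^-1 * \sum_(1 <= t < T.+1) sqnorm (grad (f t) (xs t))
     + (L + alpha + 5) * (sqnorm (omgd X f L K x0 1%N - xs 1%N)
                          + 2 * path_len X f T).
Proof.
move=> _ T_gt0 X_nonempty X_closed X_convex mu_gt0 mu_le_L f_diff _ f_bounds
  X_x0 alpha_gt0; cbv zeta beta; set K := `|Num.ceil _|%N.
have f_cont t (tT : (1 <= t <= T)%N) x (Xx : X x) : {for x, continuous (f t)}.
  exact: differentiable_continuous (f_diff t tT x Xx).
have f_sc t (tT : (1 <= t <= T)%N) : strongly_convex_on X (f t) (grad (f t)) mu.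
  by move=> x y Xx Xy; have [] := f_bounds t tT x y Xx Xy.
have f_smooth t (tT : (1 <= t <= T)%N) : smooth_on X (f t) (grad (f t)) L.
  by move=> x y Xx Xy; have [] := f_bounds t tT x y Xx Xy.
have K_rate := contraction_pow_ceil_le_quarter mu_gt0 mu_le_L.
have := omgd_sum_tracking_le X_closed X_nonempty X_convex mu_gt0 mu_le_L X_x0
  f_cont f_sc f_smooth K_rate T_gt0.
have := omgd_sum_switch_le X_closed X_nonempty X_convex mu_gt0 mu_le_L X_x0
  f_cont f_sc f_smooth K_rate T_gt0.
have hitting : \sum_(1 <= t < T.+1) f t (omgd X f L K x0 t)
    <= \sum_(1 <= t < T.+1) (f t (argmin X (f t))
         + (2 * alpha)^-1 * sqnorm (grad (f t) (argmin X (f t)))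
         + (L + alpha) / 2 * sqnorm (omgd X f L K x0 t - argmin X (f t))).
  apply: ler_sum_nat => t tT; apply: smooth_on_le_young (f_smooth t tT) _ _ alpha_gt0.
    exact: (is_argmin_xs X_closed X_nonempty mu_gt0 f_cont f_sc tT).1.
  exact: omgd_in.
move: hitting; rewrite /omgd_cost !big_split /= -!mulr_sumr.
set S := \sum_(1 <= t < T.+1) sqnorm (_ - argmin X (f t)).
have S_ge0 : 0 <= S by rewrite sumr_ge0 // => t _; exact: sqnorm_ge0.
move=> hitting switching tracking.
have weight_ge0 : 0 <= (L + alpha) / 2 + 5 / 4 by lra.
by have := ler_wpM2l weight_ge0 tracking; lra.
Qed.
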